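(* In Zhu's algebra $A(M(1)^+)$ (writing $\omega$, $J$ for $[\omega]$, $[J]$ and products for $*$), $$J^2=p(\omega)+q(\omega)J,$$ where $p(x)=\frac{1816}{35}x^4-\frac{212}{5}x^3+\frac{89}{10}x^2-\frac{27}{70}x$ and $q(x)=-\frac{314}{35}x^2+\frac{89}{14}x-\frac{27}{70}$. Equivalently, $$(J+\omega-4\omega^2)(70J+908\omega^2-515\omega+27)=0.$$
   Context: Let $\mathfrak h=\mathbb C h$ with $\langle h,h\rangle=1$, Heisenberg algebra $[h(m),h(n)]=m\delta_{m+n,0}$. Let $M(1)=\mathbb C[h(-1),h(-2),\dots]\mathbf 1$ be the Heisenberg vertex operator algebra of central charge 1 (vacuum $\mathbf 1$, $Y(h(-1)\mathbf 1,z)=\sum_nh(n)z^{-n-1}$, vertex operators of monomials given by normally ordered products of derivatives of $h(z)$), with conformal vector $\omega=\frac12h(-1)^2\mathbf 1$. Let $\theta$ be the automorphism acting by $(-1)^k$ on monomials $h(-n_1)\cdots h(-n_k)\mathbf 1$ and $M(1)^+$ its fixed-point vertex operator subalgebra. Let $J=h(-1)^4\mathbf 1-2h(-3)h(-1)\mathbf 1+\frac32h(-2)^2\mathbf 1$. Zhu's algebra: for a vertex operator algebra $V$, homogeneous $u$ and $v\in V$ with $Y(u,z)=\sum u_nz^{-n-1}$, set $u*v=\sum_{i\ge0}\binom{\mathrm{wt}(u)}{i}u_{i-1}v$ and $u\circ v=\sum_{i\ge0}\binom{\mathrm{wt}(u)}{i}u_{i-2}v$; $O(V)$ is the span of all $u\circ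 v$, and $A(V)=V/O(V)$ is an associative algebra (with unit $[\mathbf 1]$) under the product induced by $*$; $[v]=v+O(V)$. *)

From HB Require Import structures.
From mathcomp Require Import all_boot all_order all_algebra.
From mathcomp Require Import finmap.
From mathcomp.multinomials Require Import monalg.
Set Implicit Arguments. Unset Strict Implicit. Unset Printing Implicit Defensive.
Import Order.TTheory GRing.Theory Num.Theory.
Local Open Scope ring_scope.

(* The Heisenberg VOA M(1) = C[h(-1),h(-2),...]1 (we use the rationals as    *)
(* coefficient field: all structure constants are rational, and membership  *)
(* in O(V) for rational vectors is the same over Q and C by linear algebra; *)
(* monomial  x_{n_1-1} ... x_{n_k-1}  in the variables x_i, i : nat, i.e.   *)
(* variable x_i stands for h(-(i+1)).                                       *)
Definition K := cmonom nat.
Definition V := {malg rat[K]}.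

Definition mwt (m : K) : nat := (\sum_(i <- finsupp m) m i * i.+1)%N.

Definition hlist (m : K) : seq nat :=
  flatten [seq nseq (m i) i.+1 | i <- finsupp m].

Definition vwt (v : V) : nat := (\max_(k <- msupp v) mwt k)%N.

Definition hx (i : nat) : V := << ucm i >>.

Definition dx (i : nat) (v : V) : V :=
  \sum_(k <- msupp v) (v@_k * (k i)%:R) *: << divcm k (ucm i) >>.

(* Heisenberg modes on M(1): h(-n) = multiplication by x_{n-1} (n > 0),
   h(n) = n d/dx_{n-1} (n > 0), h(0) = 0.  [h(m),h(n)] = m delta_{m+n,0}. *)
Definition hop (n : int) (v : V) : V :=
  match n with
  | Posz 0 => 0
  | Posz n'.+1 => n'.+1%:R *: dx n' v
  | Negz n' => hx n' * v
  end.

Definition nop (ms : seq int) (v : V) : V :=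
  foldr hop (foldr hop v [seq m <- ms | 0 <= m]) [seq m <- ms | m < 0].

Definition zbinom (a : int) (k : nat) : rat :=
  (\prod_(i < k) (a%:~R - i%:R)) / (k`!)%:R.

Fixpoint tuples (r : seq int) (k : nat) : seq (seq int) :=
  if k is k'.+1 then [seq x :: t | x <- r, t <- tuples r k'] else [:: [::]].

(* Mode u_j v for a basis monomial u = h(-n_1)...h(-n_k)1, where
   Y(u,z) = : d^(n_1-1)h(z) ... d^(n_k-1)h(z) :,  d^(n-1) = (1/(n-1)!) (d/dz)^(n-1),
   d^(n-1)h(z) = sum_m binom(-m-1,n-1) h(m) z^(-m-n).  Hence
   u_j v = sum_{m_1+..+m_k = j+1-wt u} prod_i binom(-m_i-1,n_i-1) :h(m_1)..h(m_k): v.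
   All terms with some m_i outside [L, W] vanish (W = max weight in v, and
   L = (j+1-wt u) - k W), so the (a priori infinite) sum is the finite one below. *)
Definition mono_mode (u : K) (j : int) (v : V) : V :=
  let ns := hlist u in
  let k := size ns in
  let W := vwt v in
  let s := j + 1 - (mwt u)%:Z in
  let L := s - (k * W)%N%:Z in
  let r := if L <= W%:Z then [seq L + i%:Z | i <- iota 0 (absz (W%:Z + 1 - L)%R)]
           else [::] in
  \sum_(ms <- tuples r k | \sum_(x <- ms) x == s)
     (\prod_(p <- zip ms ns) zbinom (- p.1 - 1) p.2.-1) *: nop ms v.

(* Y(u,z) = sum_j u_j z^(-j-1), extended linearly in u *)
Definition vmode (u : V) (j : int) (v : V) : V :=
  \sum_(k <- msupp u) u@_k *: mono_mode k j v.

Definition hwt (u : V) : nat := vwt u.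
Definition homogeneous (u : V) : bool := all (fun k => mwt k == hwt u) (msupp u).

Definition zstar (u v : V) : V :=
  \sum_(i < (hwt u).+1) 'C(hwt u, i)%:R *: vmode u (i%:Z - 1) v.
Definition zcirc (u v : V) : V :=
  \sum_(i < (hwt u).+1) 'C(hwt u, i)%:R *: vmode u (i%:Z - 2) v.

Definition theta (u : V) : V :=
  \sum_(k <- msupp u) ((-1) ^+ mdeg k * u@_k) *: << k >>.
Definition inVplus (u : V) : bool := theta u == u.

Definition inO_Vplus (x : V) : Prop :=
  exists s : seq (rat * V * V),
    (forall t, t \in s -> [&& homogeneous t.1.2, inVplus t.1.2 & inVplus t.2]) /\
    x = \sum_(t <- s) t.1.1 *: zcirc t.1.2 t.2.

Definition vac : V := 1.
Definition omega : V := (1 / 2) *: (hx 0 * hx 0).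
Definition Jv : V := hx 0 ^+ 4 - 2 *: (hx 2 * hx 0) + (3 / 2) *: (hx 1 * hx 1).

(* omega * (omega * ( ... * v)) with k factors omega; its class is [omega]^k [v] *)
Definition wpow (k : nat) (v : V) : V := iter k (zstar omega) v.

From Stdlib Require Import QArith.
From HB Require Import structures.
From mathcomp Require Import all_boot all_order all_algebra.
From mathcomp Require Import finmap.
From mathcomp.multinomials Require Import monalg.
From mathcomp Require Import ring ssrZ.
Import ssrZ.Instances.
Set Implicit Arguments. Unset Strict Implicit. Unset Printing Implicit Defensive.
Import Order.TTheory GRing.Theory Num.Theory.

(* The identity is a finite computation in M(1).  It asserts that
   J*J - p(omega) - q(omega)*J lies in O(M(1)^+); we write this vector as an
   explicit rational combination of 26 products u o v, with u, v monomials of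
   even degree and u homogeneous, and verify the equality by evaluation. *)

Local Open Scope nat_scope.

Definition cmonom_of (e : seq nat) : K :=
  [cmonom nth 0 e i | i in [fset i | i in iota 0 (size e)]]%M.

Lemma cmonom_ofE e j : cmonom_of e j = nth 0 e j.
Proof.
rewrite /cmonom_of cmE fsfun_fun; case: ifP => // /negbT j_out.
rewrite nth_default // leqNgt; apply: contra j_out => j_lt.
by apply/imfsetP; exists j; rewrite //= mem_iota.
Qed.

Lemma eq_cmonom_of e1 e2 : nth 0 e1 =1 nth 0 e2 -> cmonom_of e1 = cmonom_of e2.
Proof. by move=> e12; apply/eqP/cmP => j; rewrite !cmonom_ofE. Qed.

Lemma cmonom_of_nil : cmonom_of [::] = @onecm nat.
Proof. by apply/eqP/cmP => j; rewrite cmonom_ofE onecmE nth_nil. Qed.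

Lemma mulcm_ucm_of i e : mulcm (ucm i) (cmonom_of e) = cmonom_of (incr_nth e i).
Proof. by apply/eqP/cmP => j; rewrite cmM cmU !cmonom_ofE nth_incr_nth. Qed.

Definition decr_nth (e : seq nat) (i : nat) := set_nth 0 e i (nth 0 e i).-1.

Lemma divcm_ucm_of e i : divcm (cmonom_of e) (ucm i) = cmonom_of (decr_nth e i).
Proof.
apply/eqP/cmP => j; rewrite divcmE cmU !cmonom_ofE nth_set_nth /=.
by case: eqVneq => [->|]; rewrite ?subn1 ?subn0.
Qed.

Fixpoint trim (e : seq nat) : seq nat :=
  if e is a :: e' then
    let t := trim e' in if (t == [::]) && (a == 0) then [::] else a :: t
  else [::].

Lemma nth_trim e : nth 0 (trim e) =1 nth 0 e.
Proof.
elim: e => [|a e IH] j //=; case: ifP => [/andP[/eqP t0 /eqP ->]|_]; last by case: j.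
by case: j => [|j] //=; rewrite -IH t0 nth_nil.
Qed.

Lemma cmonom_of_trim e : cmonom_of (trim e) = cmonom_of e.
Proof. exact/eq_cmonom_of/nth_trim. Qed.

Definition trimmed (e : seq nat) : bool := last 1 e != 0.

Lemma trimmed_size e1 e2 : trimmed e2 -> nth 0 e1 =1 nth 0 e2 -> size e2 <= size e1.
Proof.
case/lastP: e2 => [//|e2 x]; rewrite /trimmed last_rcons size_rcons => x_neq0 e12.
rewrite ltnNge; apply: contra x_neq0 => small.
by have := e12 (size e2); rewrite nth_rcons ltnn eqxx nth_default // => <-.
Qed.

Lemma cmonom_of_inj : {in trimmed &, injective cmonom_of}.
Proof.
move=> e1 e2 t1 t2 e12.
have nth12 j : nth 0 e1 j = nth 0 e2 j by rewrite -!cmonom_ofE e12.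
apply: (@eq_from_nth _ 0) => [|i _]; last exact: nth12.
by apply/eqP; rewrite eqn_leq !trimmed_size.
Qed.

Definition esupp (e : seq nat) : seq nat := [seq i <- iota 0 (size e) | nth 0 e i != 0].

Lemma perm_finsupp_cmonom_of e : perm_eq (finsupp (cmonom_of e)) (esupp e).
Proof.
apply: uniq_perm; rewrite ?fset_uniq ?filter_uniq ?iota_uniq // => j.
rewrite mem_finsupp cmonom_ofE mem_filter mem_iota /= add0n.
by case: ltnP => j_size; rewrite ?andbT // nth_default ?eqxx.
Qed.

Definition ewt (e : seq nat) : nat := sumn [seq nth 0 e i * i.+1 | i <- esupp e].
Definition edeg (e : seq nat) : nat := sumn [seq nth 0 e i | i <- esupp e].
Definition ehlist (e : seq nat) : seq nat :=
  flatten [seq nseq (nth 0 e i) i.+1 | i <- esupp e].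

Lemma mwt_cmonom_of e : mwt (cmonom_of e) = ewt e.
Proof.
rewrite /mwt (perm_big _ (perm_finsupp_cmonom_of e)) /ewt sumnE big_map.
by apply: eq_bigr => i _; rewrite cmonom_ofE.
Qed.

Lemma mdeg_cmonom_of e : mdeg (cmonom_of e) = edeg e.
Proof.
rewrite /mdeg (perm_big _ (perm_finsupp_cmonom_of e)) /edeg sumnE big_map.
by apply: eq_bigr => i _; rewrite cmonom_ofE.
Qed.

Lemma perm_hlist_cmonom_of e : perm_eq (hlist (cmonom_of e)) (ehlist e).
Proof.
rewrite /hlist (eq_map (g := fun i => nseq (nth 0 e i) i.+1)).
  exact/perm_flatten/perm_map/perm_finsupp_cmonom_of.
by move=> i; rewrite cmonom_ofE.
Qed.

Local Open Scope ring_scope.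

Definition ratZ (z : Z) : rat := (int_of_Z z)%:~R.

Lemma ratZD a b : ratZ (a + b)%Z = ratZ a + ratZ b.
Proof. by rewrite /ratZ (raddfD int_of_Z) intrD. Qed.

Lemma ratZM a b : ratZ (a * b)%Z = ratZ a * ratZ b.
Proof. by rewrite /ratZ (rmorphM int_of_Z) intrM. Qed.

Lemma ratZN a : ratZ (- a)%Z = - ratZ a.
Proof. by rewrite /ratZ (raddfN int_of_Z) mulrNz. Qed.

Lemma ratZ_int a : ratZ (Z_of_int a) = a%:~R.
Proof. by rewrite /ratZ Z_of_intK. Qed.

Lemma ratZ_nat n : ratZ (Z.of_nat n) = n%:R.
Proof. exact: (ratZ_int n). Qed.

Lemma ratZ_eq0 z : (ratZ z == 0) = Z.eqb z 0.
Proof.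
rewrite /ratZ intr_eq0; apply/eqP/Z.eqb_spec => [z0|-> //].
by rewrite -[z]int_of_ZK z0.
Qed.

Lemma ratZ_pos_neq0 p : ratZ (Zpos p) != 0.
Proof. by rewrite ratZ_eq0. Qed.

Definition ratQ (x : Q) : rat := ratZ (Qnum x) / ratZ (Zpos (Qden x)).

Lemma ratQ_Qeq x y : Qeq x y -> ratQ x = ratQ y.
Proof.
case: x y => [a d] [b e]; rewrite /Qeq /ratQ /= => /(congr1 ratZ).
rewrite !ratZM => ad_bd; apply/eqP.
by rewrite eqr_div ?ratZ_pos_neq0 ?ad_bd.
Qed.

Lemma ratQ_red x : ratQ (Qred x) = ratQ x.
Proof. exact/ratQ_Qeq/Qred_correct. Qed.

Lemma ratQ_eq0 x : (ratQ x == 0) = Z.eqb (Qnum x) 0.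
Proof. by rewrite mulf_eq0 invr_eq0 ratZ_eq0 (negbTE (ratZ_pos_neq0 _)) orbF. Qed.

Lemma ratQ_inject_Z z : ratQ (inject_Z z) = ratZ z.
Proof. by rewrite /ratQ divr1. Qed.

Definition qplus (x y : Q) : Q := Qred (Qplus x y).
Definition qmult (x y : Q) : Q := Qred (Qmult x y).

Lemma ratQ_plus x y : ratQ (qplus x y) = ratQ x + ratQ y.
Proof.
rewrite /qplus ratQ_red; case: x y => [a d] [b e]; rewrite /Qplus /ratQ /=.
have := ratZ_pos_neq0 d; have := ratZ_pos_neq0 e.
rewrite ratZD !ratZM -[Zpos (d * e)]/(Zpos d * Zpos e)%Z ratZM.
by move=> *; field; apply/andP.
Qed.

Lemma ratQ_mult x y : ratQ (qmult x y) = ratQ x * ratQ y.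
Proof.
rewrite /qmult ratQ_red; case: x y => [a d] [b e]; rewrite /Qmult /ratQ /=.
have := ratZ_pos_neq0 d; have := ratZ_pos_neq0 e.
rewrite ratZM -[Zpos (d * e)]/(Zpos d * Zpos e)%Z ratZM.
by move=> *; field; apply/andP.
Qed.

Lemma ratQV x : ratQ (Qinv x) = (ratQ x)^-1.
Proof.
case: x => [[|p|p] d]; rewrite /Qinv /ratQ /=; first by rewrite !mul0r invr0.
  by rewrite invf_div.
by rewrite -[Zneg d]/(- Zpos d)%Z -[Zneg p]/(- Zpos p)%Z !ratZN invf_div invrN mulrN mulNr.
Qed.

Lemma ratQ_opp x : ratQ (Qopp x) = - ratQ x.
Proof. by case: x => [a d]; rewrite /ratQ /= ratZN mulNr. Qed.

Lemma Q_eqP : Equality.axiom (fun x y : Q => Z.eqb (Qnum x) (Qnum y) && Pos.eqb (Qden x) (Qden y)).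
Proof.
case=> [a d] [b e] /=; apply: (iffP andP) => [[/Z.eqb_eq -> /Pos.eqb_eq ->] //|[-> ->]].
by rewrite Z.eqb_refl Pos.eqb_refl.
Qed.

HB.instance Definition _ := hasDecEq.Build Q Q_eqP.

Definition qvec := seq (seq nat * Q).

(* Locked, so that unification never unfolds [qeval] of a concrete list. *)
Definition qeval_def (l : qvec) : V := \sum_(p <- l) ratQ p.2 *: << cmonom_of p.1 >>.
Fact qeval_key : unit. Proof. by []. Qed.
Definition qeval := locked_with qeval_key qeval_def.
Canonical qeval_unlockable := [unlockable fun qeval].

Lemma qeval_nil : qeval [::] = 0.
Proof. by rewrite unlock /qeval_def big_nil. Qed.

Lemma qeval_cons p l : qeval (p :: l) = ratQ p.2 *: << cmonom_of p.1 >> + qeval l.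
Proof. by rewrite unlock /qeval_def big_cons. Qed.

Lemma qeval_cat l1 l2 : qeval (l1 ++ l2) = qeval l1 + qeval l2.
Proof. by rewrite unlock /qeval_def big_cat. Qed.

Lemma qeval_flatten (T : Type) (f : T -> qvec) (s : seq T) :
  qeval (flatten [seq f x | x <- s]) = \sum_(x <- s) qeval (f x).
Proof.
elim: s => [|x s IH]; first by rewrite big_nil qeval_nil.
by rewrite big_cons /= qeval_cat IH.
Qed.

Definition qscale (c : Q) (l : qvec) : qvec := [seq (p.1, qmult c p.2) | p <- l].

Lemma qeval_scale c l : qeval (qscale c l) = ratQ c *: qeval l.
Proof.
elim: l => [|p l IH]; first by rewrite qeval_nil scaler0.
by rewrite /= !qeval_cons IH scalerDr ratQ_mult scalerA.
Qed.

Definition qsub (l1 l2 : qvec) : qvec := l1 ++ qscale (inject_Z (-1)) l2.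

Lemma qeval_sub l1 l2 : qeval (qsub l1 l2) = qeval l1 - qeval l2.
Proof. by rewrite qeval_cat qeval_scale ratQ_inject_Z scaleN1r. Qed.

Fixpoint qinsert (e : seq nat) (c : Q) (l : qvec) : qvec :=
  if l is p :: l' then
    if e == p.1 then (e, qplus c p.2) :: l' else p :: qinsert e c l'
  else [:: (e, c)].

Lemma qeval_insert e c l : qeval (qinsert e c l) = ratQ c *: << cmonom_of e >> + qeval l.
Proof.
elim: l => [|p l IH] /=; first by rewrite qeval_cons qeval_nil.
case: eqP => [->|_]; rewrite !qeval_cons; last by rewrite IH; exact: addrCA.
by rewrite ratQ_plus scalerDl -addrA.
Qed.

Definition qnorm (l : qvec) : qvec :=
  [seq p <- foldr (fun p acc => qinsert (trim p.1) p.2 acc) [::] l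
     | ~~ Z.eqb (Qnum p.2) 0].

Lemma qeval_norm l : qeval (qnorm l) = qeval l.
Proof.
have drop0 l' : qeval [seq p <- l' | ~~ Z.eqb (Qnum p.2) 0] = qeval l'.
  elim: l' => [|p l' IH] //=; case: ifPn => [_|/negPn]; rewrite !qeval_cons IH //.
  by rewrite -ratQ_eq0 => /eqP->; rewrite scale0r add0r.
rewrite drop0; elim: l => [|p l IH] //=.
by rewrite qeval_insert qeval_cons IH cmonom_of_trim.
Qed.

Definition qeqb (l1 l2 : qvec) : bool := nilp (qnorm (qsub l1 l2)).

Lemma qeval_eq l1 l2 : qeqb l1 l2 -> qeval l1 = qeval l2.
Proof.
move/nilP=> norm0; apply/eqP; rewrite -subr_eq0 -qeval_sub -qeval_norm norm0.
by rewrite qeval_nil.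
Qed.

Definition qwf (l : qvec) : bool :=
  uniq (map fst l) && all (fun p => trimmed p.1 && ~~ Z.eqb (Qnum p.2) 0) l.

Lemma qwf_trimmed l : qwf l -> all trimmed (map fst l).
Proof. by case/andP=> _ /allP ok; apply/allP=> _ /mapP[p /ok/andP[p_trim _] ->]. Qed.

Lemma mcoeff_qeval l k : (qeval l)@_k = \sum_(p <- l) ratQ p.2 * (cmonom_of p.1 == k)%:R.
Proof.
elim: l => [|p l IH]; first by rewrite qeval_nil big_nil mcoeff0.
by rewrite qeval_cons big_cons mcoeffD mcoeffZ mcoeffU1 IH.
Qed.

Lemma mem_msupp_qeval l k : qwf l -> (k \in msupp (qeval l)) = (k \in map cmonom_of (map fst l)).
Proof.
elim: l k => [|p l IH] k; first by rewrite qeval_nil msupp0 in_fset0.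
move=> wf_pl; have /andP[p_trim /allP trimmed_l] := qwf_trimmed wf_pl.
move: wf_pl; rewrite /qwf /= => /andP[/andP[p_new uniq_l] /andP[/andP[_ p_neq0] all_l]].
have wf_l : qwf l by rewrite /qwf uniq_l.
rewrite -mcoeff_neq0 mcoeff_qeval big_cons -mcoeff_qeval in_cons.
case: (eqVneq (cmonom_of p.1) k) => [<-|p_k]; last by rewrite mulr0 add0r mcoeff_neq0 IH.
rewrite mulr1 mcoeff_outdom ?addr0 ?ratQ_eq0 // IH //.
apply/negP=> /mapP[e e_l eq_pe].
by move: p_new; rewrite (cmonom_of_inj p_trim (trimmed_l e e_l) eq_pe) e_l.
Qed.

Lemma perm_msupp_qeval l : qwf l -> perm_eq (msupp (qeval l)) (map cmonom_of (map fst l)).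
Proof.
move=> wf_l; apply: uniq_perm; rewrite ?fset_uniq //; last by move=> k; rewrite mem_msupp_qeval.
have /allP trimmed_l := qwf_trimmed wf_l.
rewrite map_inj_in_uniq; first by case/andP: wf_l.
by move=> e1 e2 /trimmed_l t1 /trimmed_l t2; apply: cmonom_of_inj.
Qed.

Definition qwt (l : qvec) : nat := foldr maxn 0 [seq ewt p.1 | p <- l].

Lemma vwt_qeval l : qwf l -> vwt (qeval l) = qwt l.
Proof.
move=> wf_l; rewrite /vwt (perm_big _ (perm_msupp_qeval wf_l)) !big_map /qwt.
by elim: l {wf_l} => [|p l IH]; rewrite ?big_nil // big_cons IH mwt_cmonom_of.
Qed.

Lemma homogeneous_qeval l : qwf l -> all (fun p => ewt p.1 == qwt l) l -> homogeneous (qeval l).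
Proof.
move=> wf_l wt_l; rewrite /homogeneous /hwt vwt_qeval // (perm_all _ (perm_msupp_qeval wf_l)).
by rewrite !all_map; apply: sub_all wt_l => p /=; rewrite mwt_cmonom_of.
Qed.

Lemma scale_malgU (c : rat) (m : K) : c *: (<< m >> : V) = << c *g m >>.
Proof.
by apply/malgP => k; rewrite (mcoeffU m c k) mcoeffZ mcoeffU1 mulr_natr.
Qed.

Lemma sum_msupp_qeval (F : K -> V) l :
  \sum_(k <- msupp (qeval l)) (qeval l)@_k *: F k = \sum_(p <- l) ratQ p.2 *: F (cmonom_of p.1).
Proof.
have -> : \sum_(k <- msupp (qeval l)) (qeval l)@_k *: F k
          = mmap (@mkmalgU K rat (@onecm nat)) F (qeval l).
  by rewrite mmapE; apply: eq_bigr => k _; rewrite mul_malgC.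
elim: l => [|p l IH]; first by rewrite qeval_nil big_nil mmap0.
by rewrite qeval_cons big_cons mmapD IH scale_malgU mmapU mul_malgC.
Qed.

Lemma theta_qeval l : all (fun p => ~~ odd (edeg p.1)) l -> theta (qeval l) = qeval l.
Proof.
rewrite /theta; under eq_bigr => k _ do rewrite mulrC -scalerA.
rewrite sum_msupp_qeval; elim: l => [|p l IH]; first by rewrite big_nil qeval_nil.
case/andP=> p_even l_even; rewrite big_cons qeval_cons (IH l_even) mdeg_cmonom_of.
by rewrite -signr_odd (negbTE p_even) expr0 scale1r.
Qed.

Lemma inVplus_qeval l : all (fun p => ~~ odd (edeg p.1)) l -> inVplus (qeval l).
Proof. by move=> even_l; rewrite /inVplus theta_qeval. Qed.

Definition qnat (n : nat) : Q := inject_Z (Z.of_nat n).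

Lemma ratQ_nat n : ratQ (qnat n) = n%:R.
Proof. by rewrite ratQ_inject_Z ratZ_nat. Qed.

Definition qdx (i : nat) (l : qvec) : qvec :=
  [seq (decr_nth p.1 i, qmult p.2 (qnat (nth 0%N p.1 i))) | p <- l & nth 0%N p.1 i != 0%N].

Lemma dx_qeval i l : dx i (qeval l) = qeval (qdx i l).
Proof.
rewrite /dx; under eq_bigr => k _ do rewrite -scalerA.
rewrite sum_msupp_qeval; elim: l => [|p l IH]; first by rewrite big_nil qeval_nil.
rewrite big_cons {}IH cmonom_ofE divcm_ucm_of /qdx /=.
case: eqP => [->|_] /=; first by rewrite mulr0n scale0r scaler0 add0r.
by rewrite qeval_cons ratQ_mult ratQ_nat scalerA.
Qed.

Definition qmulx (i : nat) (l : qvec) : qvec := [seq (incr_nth p.1 i, p.2) | p <- l].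

Lemma hx_mulU i e : hx i * << cmonom_of e >> = << cmonom_of (incr_nth e i) >>.
Proof. by rewrite /hx malgM_def fgmulUU mulr1 -mulcm_ucm_of. Qed.

Lemma mulx_qeval i l : hx i * qeval l = qeval (qmulx i l).
Proof.
elim: l => [|p l IH]; first by rewrite qeval_nil mulr0.
by rewrite !qeval_cons mulrDr {}IH -scalerAr hx_mulU.
Qed.

Definition qhop (n : int) (l : qvec) : qvec :=
  match n with
  | Posz 0 => [::]
  | Posz n'.+1 => qscale (qnat n'.+1) (qdx n' l)
  | Negz n' => qmulx n' l
  end.

Lemma hop_qeval n l : hop n (qeval l) = qeval (qhop n l).
Proof.
case: n => [[|n]|n] /=; first by rewrite qeval_nil.
  by rewrite qeval_scale ratQ_nat dx_qeval.
exact: mulx_qeval.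
Qed.

Definition qnop (ms : seq int) (l : qvec) : qvec :=
  foldr qhop (foldr qhop l [seq m <- ms | 0 <= m]) [seq m <- ms | m < 0].

Lemma nop_qeval ms l : nop ms (qeval l) = qeval (qnop ms l).
Proof.
have foldr_hop s l' : foldr hop (qeval l') s = qeval (foldr qhop l' s).
  by elim: s => [|n s IH] //=; rewrite IH hop_qeval.
by rewrite /nop /qnop !foldr_hop.
Qed.

Definition zbinomQ (a : int) (k : nat) : Q :=
  let falling := foldr (fun i acc => qmult (inject_Z (Z_of_int a - Z.of_nat i)) acc) in
  qmult (falling (inject_Z 1) (iota 0 k)) (Qinv (qnat k`!)).

Lemma ratQ_zbinomQ a k : ratQ (zbinomQ a k) = zbinom a k.
Proof.
rewrite /zbinomQ /zbinom ratQ_mult ratQV ratQ_nat; congr (_ / _).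
rewrite -(big_mkord xpredT (fun i => a%:~R - i%:R)) /index_iota subn0.
elim: (iota 0 k) => [|i s IH] /=; first by rewrite big_nil.
by rewrite big_cons ratQ_mult {}IH ratQ_inject_Z ratZD ratZN ratZ_int ratZ_nat.
Qed.

Definition zbinom_prodQ (ms : seq int) (ns : seq nat) : Q :=
  foldr (fun p acc => qmult (zbinomQ (- p.1 - 1) p.2.-1) acc) (inject_Z 1) (zip ms ns).

Lemma ratQ_zbinom_prodQ ms ns :
  ratQ (zbinom_prodQ ms ns) = \prod_(p <- zip ms ns) zbinom (- p.1 - 1) p.2.-1.
Proof.
rewrite /zbinom_prodQ; elim: (zip ms ns) => [|p s IH] /=; first by rewrite big_nil.
by rewrite big_cons ratQ_mult ratQ_zbinomQ {}IH.
Qed.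

Definition qmode (ns : seq nat) (wt : nat) (j : int) (l : qvec) : qvec :=
  let k := size ns in
  let W := qwt l in
  let s := j + 1 - wt%:Z in
  let L := s - (k * W)%N%:Z in
  let r := if L <= W%:Z then [seq L + i%:Z | i <- iota 0 (absz (W%:Z + 1 - L)%R)]
           else [::] in
  qnorm (flatten [seq qscale (zbinom_prodQ ms ns) (qnop ms l)
                    | ms <- tuples r k & foldr +%R 0 ms == s]).

Lemma mono_mode_qeval e j l : qwf l ->
  mono_mode (cmonom_of e) j (qeval l) = qeval (qmode (hlist (cmonom_of e)) (ewt e) j l).
Proof.
move=> wf_l; rewrite /mono_mode /qmode vwt_qeval // mwt_cmonom_of.
rewrite qeval_norm qeval_flatten big_filter.
apply: congr_big => // [ms|ms _]; first by rewrite foldrE.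
by rewrite qeval_scale ratQ_zbinom_prodQ nop_qeval.
Qed.

Definition qmono_mode (e : seq nat) (j : int) (l : qvec) : qvec := qmode (ehlist e) (ewt e) j l.

(* [hlist] enumerates [finsupp], in an order that does not compute; instead we
   check that every ordering of the factors gives the same mode. *)
Definition mode_order_free (e : seq nat) (j : int) (l : qvec) : bool :=
  all (fun ns => qeqb (qmode ns (ewt e) j l) (qmono_mode e j l)) (permutations (ehlist e)).

Lemma mono_mode_qmono_mode e j l : qwf l -> mode_order_free e j l ->
  mono_mode (cmonom_of e) j (qeval l) = qeval (qmono_mode e j l).
Proof.
move=> wf_l /allP order_free; rewrite mono_mode_qeval //; apply: qeval_eq.
by apply: order_free; rewrite mem_permutations perm_hlist_cmonom_of.
Qed.

Definition qvmode (l1 : qvec) (j : int) (l2 : qvec) : qvec :=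
  qnorm (flatten [seq qscale p.2 (qmono_mode p.1 j l2) | p <- l1]).

Lemma vmode_qeval l1 j l2 : qwf l2 -> all (fun p => mode_order_free p.1 j l2) l1 ->
  vmode (qeval l1) j (qeval l2) = qeval (qvmode l1 j l2).
Proof.
move=> wf_l2 /allP order_free; rewrite /vmode sum_msupp_qeval qeval_norm qeval_flatten.
apply: eq_big_seq => p p_l1.
by rewrite qeval_scale mono_mode_qmono_mode // order_free.
Qed.

Definition qzhu (d : int) (l1 l2 : qvec) : qvec :=
  qnorm (flatten [seq qscale (qnat 'C(qwt l1, i)) (qvmode l1 (i%:Z - d) l2)
                   | i <- iota 0 (qwt l1).+1]).

Definition zhu_ok (d : int) (l1 l2 : qvec) : bool :=
  [&& qwf l1, qwf l2 &
   all (fun i => all (fun p => mode_order_free p.1 (i%:Z - d) l2) l1) (iota 0 (qwt l1).+1)].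

Lemma zhu_qeval d l1 l2 : zhu_ok d l1 l2 ->
  \sum_(i < (hwt (qeval l1)).+1) 'C(hwt (qeval l1), i)%:R *: vmode (qeval l1) (i%:Z - d) (qeval l2)
  = qeval (qzhu d l1 l2).
Proof.
case/and3P=> wf_l1 wf_l2 /allP order_free.
rewrite /hwt vwt_qeval // /qzhu qeval_norm qeval_flatten.
rewrite -(big_mkord xpredT (fun i => 'C(qwt l1, i)%:R *: vmode (qeval l1) (i%:Z - d) (qeval l2))).
apply: eq_big_seq => i i_range.
by rewrite qeval_scale ratQ_nat vmode_qeval // order_free.
Qed.

Lemma zstar_qeval l1 l2 : zhu_ok 1 l1 l2 -> zstar (qeval l1) (qeval l2) = qeval (qzhu 1 l1 l2).
Proof. exact: zhu_qeval. Qed.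

Lemma zcirc_qeval l1 l2 : zhu_ok 2 l1 l2 -> zcirc (qeval l1) (qeval l2) = qeval (qzhu 2 l1 l2).
Proof. exact: zhu_qeval. Qed.

Definition qmonom (e : seq nat) : qvec := [:: (e, 1 # 1)].

Definition vacQ : qvec := qmonom [::].

Lemma vac_qeval : vac = qeval vacQ.
Proof. by rewrite qeval_cons qeval_nil addr0 cmonom_of_nil scale1r. Qed.

Lemma hx_qeval i : hx i = qeval (qmulx i vacQ).
Proof. by rewrite -mulx_qeval -vac_qeval mulr1. Qed.

Lemma hx_mul_qeval i j : hx i * hx j = qeval (qmulx i (qmulx j vacQ)).
Proof. by rewrite -mulx_qeval -hx_qeval. Qed.

Definition omegaQ : qvec := qscale (1 # 2) (qmulx 0 (qmulx 0 vacQ)).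

Lemma omega_qeval : omega = qeval omegaQ.
Proof. by rewrite qeval_scale -hx_mul_qeval -[ratQ (1 # 2)]/(1 / 2). Qed.

Definition JQ : qvec :=
  qsub (qmulx 0 (qmulx 0 (qmulx 0 (qmulx 0 vacQ)))) (qscale (2 # 1) (qmulx 2 (qmulx 0 vacQ)))
  ++ qscale (3 # 2) (qmulx 1 (qmulx 1 vacQ)).

Lemma Jv_qeval : Jv = qeval JQ.
Proof.
rewrite qeval_cat qeval_sub !qeval_scale -2!mulx_qeval -!hx_mul_qeval.
by rewrite /Jv (exprS _ 3) (exprS _ 2) expr2 -[ratQ (2 # 1)]/(2 / 1) divr1 -[ratQ (3 # 2)]/(3 / 2).
Qed.

Definition qwpow (k : nat) (l : qvec) : qvec := iter k (qzhu 1 omegaQ) l.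

Lemma wpow_qeval k n l : (k <= n)%N -> all (fun i => zhu_ok 1 omegaQ (qwpow i l)) (iota 0 n) ->
  wpow k (qeval l) = qeval (qwpow k l).
Proof.
move=> k_le_n /allP wpow_ok; elim: k k_le_n => [//|k IH] k_lt_n.
rewrite [LHS]/= -/(wpow k _) (IH (ltnW k_lt_n)) omega_qeval zstar_qeval //.
by rewrite wpow_ok // mem_iota.
Qed.

Lemma wpow_vac_qeval k : (k <= 4)%N -> wpow k vac = qeval (qwpow k vacQ).
Proof. by move=> k_le; rewrite vac_qeval (wpow_qeval k_le); last vm_compute. Qed.

Lemma wpow_J_qeval k : (k <= 2)%N -> wpow k Jv = qeval (qwpow k JQ).
Proof. by move=> k_le; rewrite Jv_qeval (wpow_qeval k_le); last vm_compute. Qed.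

Lemma zstar_Jv_qeval : zstar Jv Jv = qeval (qzhu 1 JQ JQ).
Proof. by rewrite Jv_qeval zstar_qeval; last vm_compute. Qed.

(* A triple (c, e, f) stands for c (u o v), with u, v the monomials of
   exponent sequences e, f; the coefficients solve a linear system computed
   offline. *)
Definition witness : seq (Q * seq nat * seq nat) := [::
  (-2629 # 40, [:: 2]%N, [::]);
  (11849 # 560, [:: 2]%N, [:: 2]%N);
  (22681 # 56, [:: 2]%N, [:: 1; 1]%N);
  (140197 # 280, [:: 2]%N, [:: 1; 0; 1]%N);
  (154437 # 1904, [:: 2]%N, [:: 0; 2]%N);
  (1303 # 40, [:: 2]%N, [:: 4]%N);
  (49881 # 140, [:: 2]%N, [:: 1; 0; 0; 1]%N);
  (18769 # 280, [:: 2]%N, [:: 0; 1; 1]%N);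
  (5317 # 70, [:: 2]%N, [:: 3; 1]%N);
  (-1823789 # 7140, [:: 1; 1]%N, [::]);
  (39083 # 120, [:: 1; 1]%N, [:: 2]%N);
  (2800277 # 2380, [:: 1; 1]%N, [:: 1; 1]%N);
  (27809 # 140, [:: 1; 1]%N, [:: 1; 0; 1]%N);
  (1779 # 14, [:: 1; 1]%N, [:: 0; 2]%N);
  (229 # 70, [:: 1; 1]%N, [:: 4]%N);
  (-46048 # 357, [:: 1; 0; 1]%N, [::]);
  (-281149 # 2856, [:: 0; 2]%N, [::]);
  (-22597 # 840, [:: 1; 0; 1]%N, [:: 2]%N);
  (138043 # 11424, [:: 0; 2]%N, [:: 2]%N);
  (45683 # 280, [:: 1; 0; 1]%N, [:: 1; 1]%N);
  (144289 # 1120, [:: 0; 2]%N, [:: 1; 1]%N);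
  (-2823 # 112, [:: 4]%N, [:: 1; 1]%N);
  (30353 # 595, [:: 1; 0; 0; 1]%N, [::]);
  (-3727 # 70, [:: 0; 1; 1]%N, [::]);
  (-5499 # 280, [:: 1; 0; 0; 1]%N, [:: 2]%N);
  (5238 # 119, [:: 1; 0; 0; 0; 1]%N, [::])].

Definition witness_ok (t : Q * seq nat * seq nat) : bool :=
  let u := qmonom t.1.2 in let v := qmonom t.2 in
  [&& qwf u, all (fun p => ewt p.1 == qwt u) u, all (fun p => ~~ odd (edeg p.1)) u,
      all (fun p => ~~ odd (edeg p.1)) v & zhu_ok 2 u v].

Lemma all_witness_ok : all witness_ok witness.
Proof. by vm_compute. Qed.

Definition witness_terms : seq (rat * V * V) :=
  [seq (ratQ t.1.1, qeval (qmonom t.1.2), qeval (qmonom t.2)) | t <- witness].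

Lemma witness_termsP t : t \in witness_terms ->
  [&& homogeneous t.1.2, inVplus t.1.2 & inVplus t.2].
Proof.
case/mapP=> w w_in ->; have /and5P[wf_u wt_u even_u even_v _] := allP all_witness_ok w w_in.
by rewrite homogeneous_qeval // !inVplus_qeval.
Qed.

Definition witnessQ : qvec :=
  flatten [seq qscale t.1.1 (qzhu 2 (qmonom t.1.2) (qmonom t.2)) | t <- witness].

Lemma witness_sum : \sum_(t <- witness_terms) t.1.1 *: zcirc t.1.2 t.2 = qeval witnessQ.
Proof.
rewrite big_map qeval_flatten; apply: eq_big_seq => w w_in.
have /and5P[_ _ _ _ ok] := allP all_witness_ok w w_in.
by rewrite qeval_scale zcirc_qeval.
Qed.

(* Only linearity of [qeval]; the atoms are variables so that rewriting with
   this lemma never triggers their evaluation during unification. *)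
Lemma qeval_combination (z a4 a3 a2 a1 b2 b1 b0 : qvec) (c4 c3 c2 c1 e2 e1 e0 : Q) :
  qeval z -
  ((ratQ c4 *: qeval a4 - ratQ c3 *: qeval a3 + ratQ c2 *: qeval a2 - ratQ c1 *: qeval a1)
   + ((- ratQ e2) *: qeval b2 + ratQ e1 *: qeval b1 - ratQ e0 *: qeval b0))
  = qeval (qsub z (qsub (qsub (qscale c4 a4) (qscale c3 a3) ++ qscale c2 a2) (qscale c1 a1)
                   ++ qsub (qscale (Qopp e2) b2 ++ qscale e1 b1) (qscale e0 b0))).
Proof. by rewrite !(qeval_sub, qeval_cat) !qeval_scale ratQ_opp. Qed.

Theorem proposition4p1 :
  inO_Vplus
    (zstar Jv Jv -
     (((1816 / 35) *: wpow 4 vac - (212 / 5) *: wpow 3 vac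
       + (89 / 10) *: wpow 2 vac - (27 / 70) *: wpow 1 vac)
      + ((- (314 / 35)) *: wpow 2 Jv + (89 / 14) *: wpow 1 Jv
         - (27 / 70) *: wpow 0 Jv))).
Proof.
exists witness_terms; split; first exact: witness_termsP.
rewrite zstar_Jv_qeval (wpow_vac_qeval (k := 4) isT) (wpow_vac_qeval (k := 3) isT).
rewrite (wpow_vac_qeval (k := 2) isT) (wpow_vac_qeval (k := 1) isT) (wpow_J_qeval (k := 2) isT).
rewrite (wpow_J_qeval (k := 1) isT) (wpow_J_qeval (k := 0) isT).
rewrite -[1816 / 35]/(ratQ (1816 # 35)) -[212 / 5]/(ratQ (212 # 5)) -[89 / 10]/(ratQ (89 # 10)).
rewrite -[27 / 70]/(ratQ (27 # 70)) -[314 / 35]/(ratQ (314 # 35)) -[89 / 14]/(ratQ (89 # 14)).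
rewrite qeval_combination witness_sum.
by apply: qeval_eq; vm_compute.
Qed.
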